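(* Let $g(x)\in\mathbb{Z}[x]$ and let $\{R_i\}_{i\in I}$ be a family of rings. Then $\prod_{i\in I}R_i$ is weakly $g(x)$-$r$-clean if and only if every $R_i$ is weakly $g(x)$-$r$-clean and at most one $R_i$ is not $g(x)$-$r$-clean.
   Context: Rings are associative with identity; an integer polynomial $g(x)$ is evaluated in any ring via the canonical map $\mathbb{Z}\to R$. $Reg(R)=\{r\in R: r=ryr \text{ for some } y\in R\}$. A ring $R$ is $g(x)$-$r$-clean if every $x\in R$ can be written $x=r+s$ with $r\in Reg(R)$ and $g(s)=0$. An element $x\in R$ is weakly $g(x)$-$r$-clean if $x=r+s$ or $x=r-s$ with $r\in Reg(R)$ and $g(s)=0$; $R$ is weakly $g(x)$-$r$-clean if all its elements are. *)

From HB Require Import structures.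
From mathcomp Require Import all_boot all_order all_algebra.
Set Implicit Arguments. Unset Strict Implicit. Unset Printing Implicit Defensive.
Import GRing.Theory.
Local Open Scope ring_scope.

(* Rings: associative with identity (possibly the zero ring), not necessarily
   commutative: MathComp's pzRingType. *)

Definition gev (R : pzRingType) (g : {poly int}) (s : R) : R :=
  \sum_(k < size g) (g`_k)%:~R * s ^+ k.

Definition regular (R : pzRingType) (r : R) : Prop := exists y : R, r = r * y * r.

Definition gr_clean (g : {poly int}) (R : pzRingType) : Prop :=
  forall x : R, exists r s : R, regular r /\ gev g s = 0 /\ x = r + s.

Definition weakly_gr_clean_elt (g : {poly int}) (R : pzRingType) (x : R) : Prop :=
  exists r s : R, regular r /\ gev g s = 0 /\ (x = r + s \/ x = r - s).

Definition weakly_gr_clean (g : {poly int}) (R : pzRingType) : Prop :=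
  forall x : R, weakly_gr_clean_elt g x.

(* The direct product prod_{i in I} R_i, for an arbitrary index type I,
   with its componentwise ring operations written out explicitly.
   Its elements are dependent functions x : forall i, R i; sums, differences
   and products are computed componentwise, and since the canonical map
   Z -> prod R_i is componentwise, g(s) = 0 in the product iff g(s i) = 0
   in every R_i. *)
Section Product.
Variables (I : Type) (R : I -> pzRingType).

Definition prod_regular (r : forall i, R i) : Prop :=
  exists y : forall i, R i, forall i, r i = r i * y i * r i.

Definition prod_groot (g : {poly int}) (s : forall i, R i) : Prop :=
  forall i, gev g (s i) = 0.

Definition prod_weakly_gr_clean_elt (g : {poly int}) (x : forall i, R i) : Prop :=
  exists r s : forall i, R i, prod_regular r /\ prod_groot g s /\
    ((forall i, x i = r i + s i) \/ (forall i, x i = r i - s i)).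

Definition prod_weakly_gr_clean (g : {poly int}) : Prop :=
  forall x : forall i, R i, prod_weakly_gr_clean_elt g x.
End Product.

(* A decomposition x = r + s (or x = r - s) in a product is the same as one in
   every factor with the SAME sign, by choice. Hence the product is weakly
   g(x)-r-clean iff every element has componentwise decompositions of a common
   sign. Since -x = r - s iff x = (-r) + s and -r is regular with r, a g(x)-r-clean
   ring admits decompositions of both signs, so one exceptional factor is
   harmless. Conversely, if R_i and R_j (i <> j) both fail to be g(x)-r-clean at
   x_i and x_j, the element equal to x_i at i and -x_j at j has no decomposition
   with sign + (look at i) nor with sign - (look at j). *)

From mathcomp Require Import all_boot all_order all_algebra.
From Stdlib Require Import Classical ClassicalEpsilon ChoiceFacts.
Set Implicit Arguments. Unset Strict Implicit. Unset Printing Implicit Defensive.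
Import GRing.Theory.
Local Open Scope ring_scope.

Section RingDecompositions.
Variables (g : {poly int}) (R : pzRingType).

Lemma regularN (r : R) : regular r -> regular (- r).
Proof. by case=> y ry; exists (- y); rewrite mulrNN mulrN -ry. Qed.

Definition plus_clean (x : R) : Prop :=
  exists r s : R, regular r /\ gev g s = 0 /\ x = r + s.

Definition minus_clean (x : R) : Prop :=
  exists r s : R, regular r /\ gev g s = 0 /\ x = r - s.

Lemma weakly_gr_clean_eltE (x : R) :
  weakly_gr_clean_elt g x <-> plus_clean x \/ minus_clean x.
Proof.
split; first by case=> r [s [rr [gs [xE|xE]]]]; [left|right]; exists r, s.
by case=> -[r [s [rr [gs xE]]]]; exists r, s; do 2 split => //; [left|right].
Qed.

Lemma minus_cleanE (x : R) : minus_clean x <-> plus_clean (- x).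
Proof.
split=> -[r [s [/regularN rr [gs xE]]]]; exists (- r), s; do 2 split => //.
  by rewrite xE opprB addrC.
by rewrite -[x]opprK xE opprD.
Qed.

Lemma gr_clean_minus_clean : gr_clean g R -> forall x : R, minus_clean x.
Proof. by move=> clR x; apply/minus_cleanE; apply: clR. Qed.

Lemma not_gr_clean_witness : ~ gr_clean g R -> exists x : R, ~ plus_clean x.
Proof. exact: not_all_ex_not. Qed.

End RingDecompositions.

Lemma dependent_choice (I : Type) (A : I -> Type) (P : forall i, A i -> Prop) :
  (forall i, exists a : A i, P i a) -> exists f : forall i, A i, forall i, P i (f i).
Proof. exact: (non_dep_dep_functional_choice choice). Qed.

Section Product.
Variables (I : Type) (R : I -> pzRingType) (g : {poly int}).

Lemma prod_decomp (op : forall i, R i -> R i -> R i) (x : forall i, R i) :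
  (forall i, exists r s : R i, regular r /\ gev g s = 0 /\ x i = op i r s) ->
  exists r s : forall i, R i,
    prod_regular r /\ prod_groot g s /\ forall i, x i = op i (r i) (s i).
Proof.
move=> xdec.
have [r rP] := dependent_choice
  (P := fun i r => exists s, regular r /\ gev g s = 0 /\ x i = op i r s) xdec.
have [s sP] := dependent_choice
  (P := fun i s => regular (r i) /\ gev g s = 0 /\ x i = op i (r i) s) rP.
have [y yP] := dependent_choice
  (P := fun i y => r i = r i * y * r i) (fun i => proj1 (sP i)).
by exists r, s; split; [exists y | split=> i; case: (sP i) => _ []].
Qed.

Lemma prod_weakly_gr_clean_eltE (x : forall i, R i) :
  prod_weakly_gr_clean_elt g x <->
  (forall i, plus_clean g (x i)) \/ (forall i, minus_clean g (x i)).
Proof.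
split.
  case=> r [s [[y ry] [gs [xE|xE]]]]; [left|right] => i;
  by exists (r i), (s i); split; [exists (y i) | split].
case=> xdec.
  by have [r [s [rr [gs xE]]]] := prod_decomp (op := fun i => +%R) xdec; exists r, s; auto.
have [r [s [rr [gs xE]]]] := prod_decomp (op := fun i a b => a - b) xdec.
by exists r, s; auto.
Qed.

Definition update (f : forall i, R i) (i : I) (xi : R i) : forall j, R j :=
  fun j => match excluded_middle_informative (i = j) with
           | left e => eq_rect i R xi j e
           | right _ => f j
           end.

Lemma update_same (f : forall i, R i) (i : I) (xi : R i) : update f xi i = xi.
Proof.
rewrite /update; case: excluded_middle_informative => [e|//].
by rewrite (proof_irrelevance _ e erefl).
Qed.

Lemma update_other (f : forall i, R i) (i j : I) (xi : R i) :
  i <> j -> update f xi j = f j.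
Proof. by rewrite /update; case: excluded_middle_informative. Qed.

Lemma prod_weakly_gr_clean_factor :
  prod_weakly_gr_clean R g -> forall i, weakly_gr_clean g (R i).
Proof.
move=> prodW i xi; apply/weakly_gr_clean_eltE.
rewrite -(update_same (fun=> 0) xi).
by case/prod_weakly_gr_clean_eltE: (prodW (update (fun=> 0) xi)) => xdec; auto.
Qed.

Lemma prod_weakly_gr_clean_exception_unique :
  prod_weakly_gr_clean R g ->
  forall i j, ~ gr_clean g (R i) -> ~ gr_clean g (R j) -> i = j.
Proof.
move=> prodW i j /not_gr_clean_witness [xi nxi] /not_gr_clean_witness [xj nxj].
apply: NNPP => ij; pose x := update (update (fun=> 0) (- xj)) xi.
case/prod_weakly_gr_clean_eltE: (prodW x) => [/(_ i) | /(_ j)].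
  by rewrite /x update_same.
by rewrite /x update_other // update_same => /minus_cleanE; rewrite opprK.
Qed.

Lemma prod_weakly_gr_clean_of_factors :
  (forall i, weakly_gr_clean g (R i)) ->
  (forall i j, ~ gr_clean g (R i) -> ~ gr_clean g (R j) -> i = j) ->
  prod_weakly_gr_clean R g.
Proof.
move=> weakW uniq x; apply/prod_weakly_gr_clean_eltE.
have [[i0 ni0] | /not_ex_not_all allC] := classic (exists i0, ~ gr_clean g (R i0));
  last by left=> i; apply: allC.
have clR j : j <> i0 -> gr_clean g (R j) by move=> ji0; apply: NNPP => /uniq/(_ ni0).
case/weakly_gr_clean_eltE: (weakW i0 (x i0)) => xdec; [left|right] => j;
  (have [-> // | /clR clj] := classic (j = i0)); first exact: clj.
exact: gr_clean_minus_clean.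
Qed.

End Product.

Theorem theorem3p3 (g : {poly int}) (I : Type) (R : I -> pzRingType) :
  prod_weakly_gr_clean R g <->
  ((forall i, weakly_gr_clean g (R i)) /\
   (forall i j, ~ gr_clean g (R i) -> ~ gr_clean g (R j) -> i = j)).
Proof.
split=> [prodW | [weakW uniq]].
  split; [exact: prod_weakly_gr_clean_factor | exact: prod_weakly_gr_clean_exception_unique].
exact: prod_weakly_gr_clean_of_factors.
Qed.
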